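(* Let $P$ be a path from $u$ to $v$ and $x\in P\setminus\{u,v\}$. Then the length of the $\epsilon_2$-segment containing $x$ satisfies $|\mathrm{seg}(x,P)|\le\epsilon_2\cdot\min\{|P[u,x]|,|P[x,v]|\}$.
   Context: Let $G$ be an undirected graph with real edge weights in $[1,W]$, and let $\epsilon_2>0$. For a path $P$ and vertices $a,b$ on it, $P[a,b]$ is the subpath between them and $|Q|$ denotes the (weighted) length of a path $Q$. For a path $P=(u=v_0,v_1,\dots,v_\ell=v)$ and $1\le i,j<\ell$, the vertices $v_i,v_j$ are in the same $\epsilon_2$-segment if either (1) $|P[u,v_i]|,|P[u,v_j]|\le|P|/2$ and $\lfloor\log_{1+\epsilon_2}|P[u,v_i]|\rfloor=\lfloor\log_{1+\epsilon_2}|P[u,v_j]|\rfloor$, or (2) $|P[v_i,v]|,|P[v_j,v]|<|P|/2$ and $\lfloor\log_{1+\epsilon_2}|P[v_i,v]|\rfloor=\lfloor\log_{1+\epsilon_2}|P[v_j,v]|\rfloor$. This is an equivalence relation whose classes are contiguous subpaths; $u$ and $v$ belong to no segment. For $x\in P\setminus\{u,v\}$, $\mathrm{seg}(x,P)=P[v_l,v_r]$ where $v_l,v_r$ are the vertices of $x$'s class closest to $u$ and to $v$ respectively. *)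

From mathcomp Require Import all_boot all_order all_algebra.
From mathcomp Require Import all_classical all_reals all_analysis.
Set Implicit Arguments. Unset Strict Implicit. Unset Printing Implicit Defensive.
Import Order.TTheory GRing.Theory Num.Theory.
Local Open Scope ring_scope.

Section PathSeg.
Variables (R : realType) (V : eqType) (w : V -> V -> R).

(* A path is represented as the vertex sequence  u :: t = (v_0 = u, v_1, ..., v_l),
   with l = size t and v_l = last u t.  Vertex v_k is  nth u (u :: t) k. *)
Definition pvert (u : V) (t : seq V) (k : nat) : V := nth u (u :: t) k.

Definition plen (u : V) (t : seq V) (a b : nat) : R :=
  \sum_(a <= k < b) w (pvert u t k) (pvert u t k.+1).

Definition ptot (u : V) (t : seq V) : R := plen u t 0 (size t).

Definition flog (eps y : R) : int := Num.floor (ln y / ln (1 + eps)).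

Definition same_seg (eps : R) (u : V) (t : seq V) (i j : nat) : bool :=
  let L := ptot u t in
  let l := size t in
  [&& (0 < i < l)%N, (0 < j < l)%N &
   ((plen u t 0 i <= L / 2) && (plen u t 0 j <= L / 2) &&
      (flog eps (plen u t 0 i) == flog eps (plen u t 0 j)))
   || ((plen u t i l < L / 2) && (plen u t j l < L / 2) &&
      (flog eps (plen u t i l) == flog eps (plen u t j l)))].

Definition seg_left (eps : R) (u : V) (t : seq V) (i : nat) : nat :=
  \big[minn/i]_(j < size t | same_seg eps u t i j) j.
Definition seg_right (eps : R) (u : V) (t : seq V) (i : nat) : nat :=
  \big[maxn/i]_(j < size t | same_seg eps u t i j) j.

Definition seg_len (eps : R) (u : V) (t : seq V) (i : nat) : R :=
  plen u t (seg_left eps u t i) (seg_right eps u t i).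

End PathSeg.

(* Two vertices of the same eps-segment lie on the same side of the midpoint
   of P, and their distances to the nearer endpoint have the same
   floor (log_{1+eps} _), so these distances differ by a factor less than
   1 + eps.  The segment length is the difference of the distances of its two
   ends, hence less than eps times the smaller one, which is at most the
   distance of x to that endpoint; on x's side of the midpoint this distance
   is exactly min (|P[u,x]|, |P[x,v]|). *)
From mathcomp Require Import all_boot all_order all_algebra.
From mathcomp Require Import all_classical all_reals all_analysis.
From mathcomp Require Import lra.
Set Implicit Arguments. Unset Strict Implicit. Unset Printing Implicit Defensive.
Import Order.TTheory GRing.Theory Num.Theory.
Local Open Scope ring_scope.

Lemma flog_eq_lt (R : realType) (e y1 y2 : R) : 0 < e -> 0 < y1 ->
  flog e y1 = flog e y2 -> y2 < (1 + e) * y1.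
Proof.
move=> e_gt0 y1_gt0 flog_eq.
(* [ln] is junk on nonpositive arguments, but there the bound is trivial. *)
have [y2_le0|y2_gt0] := lerP y2 0; first by apply: le_lt_trans y2_le0 _; nra.
have e1_gt0 : 0 < 1 + e by lra.
set c := ln (1 + e); have c_gt0 : 0 < c by apply: ln_gt0; lra.
have ln_lt : ln y2 / c < ln y1 / c + 1.
  apply: (lt_le_trans (floorD1_gt _)).
  by rewrite -[Num.floor _]/(flog e y2) -flog_eq intrD lerD2r floor_le.
rewrite -ltr_ln ?posrE ?mulr_gt0 // lnM ?posrE //.
by rewrite ltr_pdivrMr // mulrDl divfK ?gt_eqF // mul1r addrC in ln_lt.
Qed.

Section Segments.
Variables (R : realType) (V : eqType) (w : V -> V -> R) (u : V) (t : seq V).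

Lemma plen_cat a b c : (a <= b <= c)%N ->
  plen w u t a c = plen w u t a b + plen w u t b c.
Proof. by move=> /andP[ab bc]; rewrite /plen (big_cat_nat ab bc). Qed.

Lemma ptot_split j : (j <= size t)%N ->
  ptot w u t = plen w u t 0 j + plen w u t j (size t).
Proof. by move=> jt; apply: plen_cat; rewrite jt. Qed.

Hypothesis w_gt0 : forall k, (k < size t)%N -> 0 < w (pvert u t k) (pvert u t k.+1).

Lemma plen_ge0 a b : (b <= size t)%N -> 0 <= plen w u t a b.
Proof.
move=> bt; rewrite /plen big_nat_cond; apply: sumr_ge0 => k /andP[/andP[_ kb] _].
exact/ltW/w_gt0/(leq_trans kb bt).
Qed.

Lemma plen_gt0 a b : (a < b <= size t)%N -> 0 < plen w u t a b.
Proof.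
move=> /andP[ab bt]; rewrite /plen big_ltn //.
apply: ltr_wpDr; last exact/w_gt0/(leq_trans ab bt).
exact: plen_ge0.
Qed.

Variable eps : R.

Lemma same_seg_refl i : (0 < i < size t)%N -> same_seg w eps u t i i.
Proof.
move=> i_in; rewrite /same_seg i_in !eqxx !andbT !andbb /=.
have [_ /ltnW i_le] := andP i_in; rewrite (ptot_split i_le).
by case: lerP => //= ?; lra.
Qed.

Lemma seg_leftP i : (0 < i < size t)%N ->
  same_seg w eps u t i (seg_left w eps u t i) && (seg_left w eps u t i <= i)%N.
Proof.
move=> i_in; rewrite /seg_left.
apply: (big_rec (fun m => same_seg w eps u t i m && (m <= i)%N)).
  by rewrite same_seg_refl ?leqnn.
move=> j m ij /andP[im m_le]; rewrite /minn; case: ltnP => jm; last exact/andP.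
by rewrite ij (leq_trans (ltnW jm) m_le).
Qed.

Lemma seg_rightP i : (0 < i < size t)%N ->
  same_seg w eps u t i (seg_right w eps u t i) && (i <= seg_right w eps u t i)%N.
Proof.
move=> i_in; rewrite /seg_right.
apply: (big_rec (fun m => same_seg w eps u t i m && (i <= m)%N)).
  by rewrite same_seg_refl ?leqnn.
move=> j m ij /andP[im m_ge]; rewrite /maxn; case: ltnP => mj; first exact/andP.
by rewrite ij (leq_trans m_ge mj).
Qed.

Lemma same_seg_flog_prefix i j :
  plen w u t 0 i <= ptot w u t / 2 -> same_seg w eps u t i j ->
  (0 < j < size t)%N /\ flog eps (plen w u t 0 j) = flog eps (plen w u t 0 i).
Proof.
move=> i_half /and3P[/andP[_ i_lt] j_in same]; split=> //.
case/orP: same => [/andP[_ /eqP->] //|/andP[/andP[i_gt _] _]].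
by move: i_half i_gt; rewrite (ptot_split (ltnW i_lt)) => *; exfalso; lra.
Qed.

Lemma same_seg_flog_suffix i j :
  ptot w u t / 2 < plen w u t 0 i -> same_seg w eps u t i j ->
  (0 < j < size t)%N /\
  flog eps (plen w u t j (size t)) = flog eps (plen w u t i (size t)).
Proof.
move=> i_half /and3P[_ j_in same]; split=> //.
by case/orP: same => [/andP[/andP[i_le _] _]|/andP[_ /eqP->] //]; exfalso; lra.
Qed.

Hypothesis eps_gt0 : 0 < eps.

Lemma seg_len_lt_prefix i : (0 < i < size t)%N ->
  plen w u t 0 i <= ptot w u t / 2 -> seg_len w eps u t i < eps * plen w u t 0 i.
Proof.
move=> i_in i_half; rewrite /seg_len.
have /andP[sa ai] := seg_leftP i_in; have /andP[sb ib] := seg_rightP i_in.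
move: (seg_left w eps u t i) (seg_right w eps u t i) sa ai sb ib => a b sa ai sb ib.
have [/andP[a_gt0 a_lt] fa] := same_seg_flog_prefix i_half sa.
have [/andP[_ b_lt] fb] := same_seg_flog_prefix i_half sb.
have P0a_gt0 : 0 < plen w u t 0 a by rewrite plen_gt0 // a_gt0 ltnW.
have := flog_eq_lt eps_gt0 P0a_gt0 (etrans fa (esym fb)).
have -> : plen w u t 0 b = plen w u t 0 a + plen w u t a b.
  by apply: plen_cat; rewrite /= (leq_trans ai ib).
have -> : plen w u t 0 i = plen w u t 0 a + plen w u t a i by apply: plen_cat.
have := mulr_ge0 (ltW eps_gt0) (plen_ge0 a (ltnW (proj2 (andP i_in)))).
lra.
Qed.

Lemma seg_len_lt_suffix i : (0 < i < size t)%N ->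
  ptot w u t / 2 < plen w u t 0 i ->
  seg_len w eps u t i < eps * plen w u t i (size t).
Proof.
move=> i_in i_half; rewrite /seg_len.
have /andP[sa ai] := seg_leftP i_in; have /andP[sb ib] := seg_rightP i_in.
move: (seg_left w eps u t i) (seg_right w eps u t i) sa ai sb ib => a b sa ai sb ib.
have [/andP[_ a_lt] fa] := same_seg_flog_suffix i_half sa.
have [/andP[_ b_lt] fb] := same_seg_flog_suffix i_half sb.
have Pbl_gt0 : 0 < plen w u t b (size t) by rewrite plen_gt0 // b_lt leqnn.
have := flog_eq_lt eps_gt0 Pbl_gt0 (etrans fb (esym fa)).
have -> : plen w u t a (size t) = plen w u t a b + plen w u t b (size t).
  by apply: plen_cat; rewrite (leq_trans ai ib) ltnW.
have -> : plen w u t i (size t) = plen w u t i b + plen w u t b (size t).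
  by apply: plen_cat; rewrite ib ltnW.
have := mulr_ge0 (ltW eps_gt0) (plen_ge0 i (ltnW b_lt)).
lra.
Qed.

End Segments.

Lemma path_pvert (V : eqType) (e : rel V) (u : V) (t : seq V) k :
  path e u t -> (k < size t)%N -> e (pvert u t k) (pvert u t k.+1).
Proof. by move=> /(pathP u) e_path /e_path. Qed.

Theorem lemma3p2 (R : realType) (V : finType) (adj : rel V) (w : V -> V -> R)
    (W eps2 : R) (u : V) (t : seq V) (i : nat) :
  symmetric adj -> irreflexive adj ->
  (forall a b, adj a b -> w a b = w b a) ->
  (forall a b, adj a b -> 1 <= w a b <= W) ->
  0 < eps2 ->
  path adj u t -> uniq (u :: t) ->
  (0 < i < size t)%N ->
  seg_len w eps2 u t i <=
    eps2 * Num.min (plen w u t 0 i) (plen w u t i (size t)).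
Proof.
move=> _ _ _ w_bnd eps_gt0 u_path _ i_in.
have w_gt0 k : (k < size t)%N -> 0 < w (pvert u t k) (pvert u t k.+1).
  by move=> /(path_pvert u_path)/w_bnd/andP[w_ge1 _]; apply: lt_le_trans w_ge1.
have := ptot_split w u (ltnW (proj2 (andP i_in))).
case: (lerP (plen w u t 0 i) (ptot w u t / 2)) => i_half tot.
  rewrite min_l; last lra.
  exact/ltW/(seg_len_lt_prefix w_gt0 eps_gt0 i_in i_half).
rewrite min_r; last lra.
exact/ltW/(seg_len_lt_suffix w_gt0 eps_gt0 i_in i_half).
Qed.
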